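(* Let $\epsilon\in(0,1/4]$. Define ${\rm sign}(x)=1$ if $x\ge0$ and ${\rm sign}(x)=-1$ otherwise. Define the sequence $(y(t))_{t\ge1}$ by $y(1)=0$ and $$y(t+1)=(1-\epsilon)y(t)-\frac{\frac12(1-\epsilon)\,{\rm sign}(y(t)-1)+\epsilon\Delta(t)}{\sqrt t},\qquad \Delta(t)=\frac{\epsilon\sqrt t\,y(t)-\frac{\epsilon}{2}{\rm sign}(y(t)-1)}{1-\epsilon}.$$ Then $y(t)\in[0,2]$ for all $t$; $y(t)\le\frac{2\epsilon^{-1}}{\sqrt t}$ for all $t$; and there exists $t_1$ such that $y(t)\ge\frac{\epsilon^{-1}}{16\sqrt t}$ for all $t\ge t_1$. *)

From Stdlib Require Import Reals.
Open Scope R_scope.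

Definition sgn (x : R) : R := if Rle_dec 0 x then 1 else -1.

Definition Delta (eps : R) (t : nat) (y : R) : R :=
  (eps * sqrt (INR t) * y - (eps / 2) * sgn (y - 1)) / (1 - eps).

Definition ystep (eps : R) (t : nat) (y : R) : R :=
  (1 - eps) * y
  - ((1 / 2) * (1 - eps) * sgn (y - 1) + eps * Delta eps t y) / sqrt (INR t).

(* yseq eps t = y(t) for t >= 1; yseq eps 0 = 0 is an unused junk value *)
Fixpoint yseq (eps : R) (t : nat) : R :=
  match t with
  | O => 0
  | S O => 0
  | S t' => ystep eps t' (yseq eps t')
  end.

(** Writing [c = (1 - 2 eps) / (1 - eps)], the recursion collapses to
    [y(t+1) = c (y(t) - sign(y(t) - 1) / (2 sqrt t))]: a contraction by [c] of
    a step of size [1 / (2 sqrt t)] towards the level 1.  Since [0 <= c < 1]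
    and the steps are at most [1/2], the sequence stays in [0, 2].  The
    rescaled quantity [eps sqrt t y(t)] can grow by at most [eps] per step
    (through [sqrt (t+1) <= sqrt t + 1/(2 sqrt t)]), while one contracted
    step at fixed [t] brings it from at most 2 down to at most [2 - 3 eps / 2],
    so it stays below 2.  For the lower bound, as long as [y(t) < 1] the update
    [16 eps sqrt t y(t+1) = c (16 eps sqrt t y(t)) + 8 eps c] keeps
    [16 eps sqrt t y(t) >= 1] once it holds, and otherwise [y(t)] stays above
    [1/3]; for [t >= eps^-2] the two alternatives agree. *)

From Pilot Require Import Defs.
From Stdlib Require Import Reals Lra Lia Psatz.
Open Scope R_scope.

Definition contraction (eps : R) : R := (1 - 2 * eps) / (1 - eps).

Definition contracted_step (c s y : R) : R := c * (y - sgn (y - 1) / (2 * s)).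

Lemma le_div_of_mul_le x a d : 0 < d -> x * d <= a -> x <= a / d.
Proof.
  intros Hd H; apply Rmult_le_reg_r with d; [exact Hd|].
  unfold Rdiv; rewrite Rmult_assoc, Rinv_l; lra.
Qed.

Lemma div_le_of_le_mul x a d : 0 < d -> a <= x * d -> a / d <= x.
Proof.
  intros Hd H; apply Rmult_le_reg_r with d; [exact Hd|].
  unfold Rdiv; rewrite Rmult_assoc, Rinv_l; lra.
Qed.

Lemma one_lt_mul_sqrt a x : 0 < a -> / (a * a) < x -> 1 < a * sqrt x.
Proof.
  intros Ha Hx.
  assert (Hx0 : 0 <= x) by (assert (0 < / (a * a)) by (apply Rinv_0_lt_compat; nra); lra).
  assert (E := sqrt_sqrt x Hx0).
  assert (0 <= sqrt x) by apply sqrt_pos.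
  assert (1 < a * a * x)
    by (rewrite <- (Rinv_r (a * a)) by nra; apply Rmult_lt_compat_l; nra).
  assert (1 < (a * sqrt x) * (a * sqrt x))
    by (replace ((a * sqrt x) * (a * sqrt x)) with (a * a * (sqrt x * sqrt x)) by ring;
        rewrite E; lra).
  assert (0 <= a * sqrt x) by nra.
  nra.
Qed.

Lemma one_le_sqrt_INR t : (1 <= t)%nat -> 1 <= sqrt (INR t).
Proof.
  intros Ht; rewrite <- sqrt_1; apply sqrt_le_1_alt.
  change 1 with (INR 1); apply le_INR; exact Ht.
Qed.

Lemma sqrt_INR_succ_le t : (1 <= t)%nat ->
  sqrt (INR t) <= sqrt (INR (S t)) <= sqrt (INR t) + / (2 * sqrt (INR t)).
Proof.
  intros Ht.
  assert (Hs := one_le_sqrt_INR t Ht).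
  assert (E := sqrt_sqrt (INR t) ltac:(apply pos_INR)).
  split; [apply sqrt_le_1_alt, le_INR; lia |].
  set (s := sqrt (INR t)) in *.
  assert (Hinv : s * / (2 * s) = / 2) by (field; lra).
  assert (0 < / (2 * s)) by (apply Rinv_0_lt_compat; lra).
  rewrite <- (sqrt_square (s + / (2 * s))) by lra.
  apply sqrt_le_1_alt; rewrite S_INR.
  nra.
Qed.

Lemma ystep_contracted eps t y : eps < 1 -> (1 <= t)%nat ->
  ystep eps t y = contracted_step (contraction eps) (sqrt (INR t)) y.
Proof.
  intros Heps Ht.
  assert (Hs : 0 < sqrt (INR t))
    by (apply sqrt_lt_R0; change 0 with (INR 0); apply lt_INR; lia).
  unfold ystep, Defs.Delta, contracted_step, contraction.
  set (s := sqrt (INR t)) in *; set (g := sgn (y - 1)).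
  field; split; lra.
Qed.

Section ContractionFactor.

Variable eps : R.
Hypothesis heps : 0 < eps <= 1 / 4.

Lemma contraction_eq : contraction eps * (1 - eps) = 1 - 2 * eps.
Proof. unfold contraction; field; lra. Qed.

Lemma contraction_ge : 2 / 3 <= contraction eps.
Proof. pose proof contraction_eq; nra. Qed.

Lemma contraction_le : contraction eps <= 1 - eps.
Proof. pose proof contraction_eq; nra. Qed.

Lemma contraction_mul_ge : 1 <= contraction eps * (1 + 8 * eps).
Proof. pose proof contraction_eq; nra. Qed.

Lemma contraction_deficit_le : 1 - contraction eps <= 8 * eps * contraction eps / 3.
Proof. pose proof contraction_eq; nra. Qed.

End ContractionFactor.

Section ContractedStep.

Variables c s y : R.
Hypothesis hs : 1 <= s.

Let inv_s_bounds : 0 < / s <= 1 /\ s * / s = 1.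
Proof.
  split; [split|field; lra].
  - apply Rinv_0_lt_compat; lra.
  - rewrite <- Rinv_1; apply Rinv_le_contravar; lra.
Qed.

Lemma contracted_step_up : y < 1 -> contracted_step c s y = c * y + c / 2 * / s.
Proof.
  intros Hy; unfold contracted_step, sgn.
  destruct (Rle_dec 0 (y - 1)); [lra | field; lra].
Qed.

Lemma contracted_step_down : 1 <= y -> contracted_step c s y = c * y - c / 2 * / s.
Proof.
  intros Hy; unfold contracted_step, sgn.
  destruct (Rle_dec 0 (y - 1)); [field; lra | lra].
Qed.

Lemma contracted_step_bounded : 0 <= c <= 1 -> 0 <= y <= 2 ->
  0 <= contracted_step c s y <= 2.
Proof.
  intros Hc Hy; destruct inv_s_bounds as [Hi _].
  destruct (Rlt_le_dec y 1) as [Hy1|Hy1];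
    [rewrite contracted_step_up | rewrite contracted_step_down]; auto; nra.
Qed.

Lemma contracted_step_scaled_le eps : 0 < eps -> 0 <= c <= 1 - eps ->
  eps * s * y <= 2 -> eps * s * contracted_step c s y <= 2 - 3 * eps / 2.
Proof.
  intros Heps Hc Hy; destruct inv_s_bounds as [Hi Es].
  destruct (Rlt_le_dec y 1) as [Hy1|Hy1];
    [rewrite contracted_step_up | rewrite contracted_step_down]; auto.
  - replace (eps * s * (c * y + c / 2 * / s)) with (c * (eps * s * y) + c * eps / 2)
      by (field; lra).
    nra.
  - replace (eps * s * (c * y - c / 2 * / s)) with (c * (eps * s * y) - c * eps / 2)
      by (field; lra).
    nra.
Qed.

Lemma contracted_step_lower eps s' : 0 < eps -> 2 / 3 <= c <= 1 ->
  1 <= c * (1 + 8 * eps) -> 1 - c <= 8 * eps * c / 3 ->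
  s <= s' -> 0 <= y -> 1 / 3 <= y \/ 1 <= 16 * eps * s * y ->
  1 / 3 <= contracted_step c s y \/ 1 <= 16 * eps * s' * contracted_step c s y.
Proof.
  intros Heps Hc Hc8 Hc3 Hss' Hy0 Hy; destruct inv_s_bounds as [Hi Es].
  destruct (Rlt_le_dec y 1) as [Hy1|Hy1];
    [rewrite contracted_step_up | rewrite contracted_step_down]; auto; [|left; nra].
  destruct (Rle_dec 1 (16 * eps * s * y)) as [Hz|Hz].
  - right.
    assert (E : 16 * eps * s * (c * y + c / 2 * / s) = c * (16 * eps * s * y) + 8 * eps * c)
      by (field; lra).
    assert (0 <= c * y + c / 2 * / s) by nra.
    assert (16 * eps * s * (c * y + c / 2 * / s) <= 16 * eps * s' * (c * y + c / 2 * / s))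
      by (apply Rmult_le_compat_r; [|apply Rmult_le_compat_l]; lra).
    nra.
  - left.
    destruct Hy as [Hy|Hy]; [|lra].
    assert (16 * eps / 3 < / s) by (apply Rmult_lt_reg_l with s; nra).
    assert (8 * eps * c / 3 <= c / 2 * / s) by nra.
    nra.
Qed.

End ContractedStep.

Section Sequence.

Variable eps : R.
Hypothesis heps : 0 < eps <= 1 / 4.

Lemma yseq_succ_contracted t : (1 <= t)%nat ->
  yseq eps (S t) = contracted_step (contraction eps) (sqrt (INR t)) (yseq eps t).
Proof.
  intros Ht; destruct t as [|t]; [lia|].
  apply ystep_contracted; [lra | exact Ht].
Qed.

Lemma yseq_bounded t : (1 <= t)%nat -> 0 <= yseq eps t <= 2.
Proof.
  induction 1 as [|t Ht IH]; [simpl; lra|].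
  rewrite yseq_succ_contracted by exact Ht.
  apply contracted_step_bounded; [apply one_le_sqrt_INR; exact Ht| |exact IH].
  pose proof (contraction_ge eps heps); pose proof (contraction_le eps heps); lra.
Qed.

Lemma yseq_scaled_le t : (1 <= t)%nat -> eps * sqrt (INR t) * yseq eps t <= 2.
Proof.
  induction 1 as [|t Ht IH]; [simpl; lra|].
  assert (Hs := one_le_sqrt_INR t Ht).
  assert (Hs' := sqrt_INR_succ_le t Ht).
  assert (Hy' := yseq_bounded (S t) ltac:(lia)).
  assert (Hc := contraction_ge eps heps).
  assert (Hstep : eps * sqrt (INR t) * yseq eps (S t) <= 2 - 3 * eps / 2).
  { rewrite yseq_succ_contracted by exact Ht.
    apply contracted_step_scaled_le; [exact Hs | lra | | exact IH].
    pose proof (contraction_le eps heps); lra. }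
  set (s := sqrt (INR t)) in *; set (s' := sqrt (INR (S t))) in *.
  set (y' := yseq eps (S t)) in *.
  assert (0 < / (2 * s)) by (apply Rinv_0_lt_compat; lra).
  assert (/ (2 * s) <= / 2) by (apply Rinv_le_contravar; lra).
  assert (eps * s' * y' <= eps * (s + / (2 * s)) * y')
    by (apply Rmult_le_compat_r; [|apply Rmult_le_compat_l]; lra).
  assert (eps * y' * / (2 * s) <= eps * 2 * / 2)
    by (apply Rmult_le_compat; [nra | lra | nra | lra]).
  nra.
Qed.

Lemma yseq_lower_alternative t : (2 <= t)%nat ->
  1 / 3 <= yseq eps t \/ 1 <= 16 * eps * sqrt (INR t) * yseq eps t.
Proof.
  assert (Hc := contraction_ge eps heps).
  induction 1 as [|t Ht IH].
  - left; rewrite yseq_succ_contracted by lia.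
    simpl INR; rewrite sqrt_1, contracted_step_up by (simpl; lra).
    rewrite Rinv_1; simpl; lra.
  - rewrite yseq_succ_contracted by lia.
    apply contracted_step_lower.
    + apply one_le_sqrt_INR; lia.
    + lra.
    + pose proof (contraction_le eps heps); lra.
    + exact (contraction_mul_ge eps heps).
    + exact (contraction_deficit_le eps heps).
    + apply sqrt_INR_succ_le; lia.
    + apply yseq_bounded; lia.
    + exact IH.
Qed.

Lemma yseq_le_upper t : (1 <= t)%nat -> yseq eps t <= 2 * / eps / sqrt (INR t).
Proof.
  intros Ht; assert (Hs := one_le_sqrt_INR t Ht).
  replace (2 * / eps / sqrt (INR t)) with (2 / (eps * sqrt (INR t))) by (field; lra).
  apply le_div_of_mul_le; [nra|].
  rewrite Rmult_comm; exact (yseq_scaled_le t Ht).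
Qed.

Lemma yseq_ge_lower t : (2 <= t)%nat -> / (eps * eps) < INR t ->
  / eps / (16 * sqrt (INR t)) <= yseq eps t.
Proof.
  intros Ht Hlarge.
  assert (Hs := one_le_sqrt_INR t ltac:(lia)).
  assert (Hy := yseq_bounded t ltac:(lia)).
  assert (Hes := one_lt_mul_sqrt eps (INR t) ltac:(lra) Hlarge).
  assert (Hz : 1 <= 16 * eps * sqrt (INR t) * yseq eps t)
    by (destruct (yseq_lower_alternative t Ht); nra).
  replace (/ eps / (16 * sqrt (INR t))) with (1 / (16 * eps * sqrt (INR t)))
    by (field; lra).
  apply div_le_of_le_mul; [nra | lra].
Qed.

End Sequence.

Theorem lemma4 (eps : R) (heps : 0 < eps <= 1 / 4) :
  (forall t : nat, (1 <= t)%nat -> 0 <= yseq eps t <= 2) /\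
  (forall t : nat, (1 <= t)%nat -> yseq eps t <= 2 * / eps / sqrt (INR t)) /\
  (exists t1 : nat, forall t : nat, (1 <= t)%nat -> (t1 <= t)%nat ->
      / eps / (16 * sqrt (INR t)) <= yseq eps t).
Proof.
  split; [exact (yseq_bounded eps heps) | split; [exact (yseq_le_upper eps heps)|]].
  destruct (INR_unbounded (/ (eps * eps))) as [n Hn].
  exists (Nat.max n 2); intros t _ Ht.
  apply yseq_ge_lower; [exact heps | lia |].
  apply Rlt_le_trans with (INR n); [exact Hn | apply le_INR; lia].
Qed.
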